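(* Suppose $\mathbf t\in\Sigma^\circ$ and let $\mathbf x\in(\Sigma^* )^\circ$ satisfy \[ \mathbf t^T\left(\mathbf x\mathbf x^T-(\nu-1)H(\mathbf x)^{-1}\right)\mathbf t\ \ge\ 0. \] Then $\mathbf x\in\mathcal C(\mathbf t)$, equivalently $\mathbf t\in\mathcal P(\mathbf x)$. In particular, if $\mathbf s=-g(\mathbf x)$ for some $\mathbf x\in(\Sigma^* )^\circ$, then $\mathbf x$ is a dual certificate (i.e. $H(\mathbf x)^{-1}\mathbf t\in\Sigma^*$) for every polynomial $\mathbf t$ satisfying $\|\mathbf t-\mathbf s\|^*_{\mathbf x}\le 1$.
   Context: Fix nonzero real polynomials $g_1,\dots,g_m$ in $n$ variables and nonnegative integers $d_1,\dots,d_m$. Let $\mathcal V$ be the real vector space of polynomials $\sum_{i=1}^m g_i r_i$ with $\deg r_i\le 2d_i$, and $\Sigma\subseteq\mathcal V$ the cone of weighted sums of squares $\sum_i g_i\sigma_i$ with each $\sigma_i$ a sum of squares of polynomials of degree at most $d_i$; assume $\Sigma$ is a proper cone. Fix a basis $\mathbf q=(q_1,\dots,q_U)$ of $\mathcal V$, identify $\mathcal V$ and its dual with $\mathbb R^U$ with the standard inner product and Euclidean norm $\|\cdot\|$; $\Sigma^*$ is the dual cone, $K^\circ$ the interior of $K$. For each $i$ fix a basis $\mathbf p_i$ (of size $L_i$) of polynomials of degree at most $d_i$ and let $\Lambda_i:\mathbb R^U\to\mathbb S^{L_i}$ be the unique linear map with $\sum_u q_u\Lambda_i(\mathbf e_u)=g_i\mathbf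 p_i\mathbf p_i^T$; $\Lambda=\Lambda_1\oplus\cdots\oplus\Lambda_m$ (block diagonal), $\Lambda^*$ its adjoint. Then $(\Sigma^* )^\circ=\{\mathbf x:\Lambda(\mathbf x)\succ0\}$ and $\Sigma^*=\{\mathbf x:\Lambda(\mathbf x)\succeq0\}$. On $(\Sigma^* )^\circ$ let $f(\mathbf x)=-\ln\det\Lambda(\mathbf x)$, with gradient $g(\mathbf x)=-\Lambda^*(\Lambda(\mathbf x)^{-1})$ (not to be confused with the weights $g_i$) and Hessian $H(\mathbf x)\mathbf w=\Lambda^*(\Lambda(\mathbf x)^{-1}\Lambda(\mathbf w)\Lambda(\mathbf x)^{-1})$, positive definite. Let $\nu=\sum_i L_i$. The dual local norm is $\|\mathbf s\|^*_{\mathbf x}=\|H(\mathbf x)^{-1/2}\mathbf s\|$. For $\mathbf s\in\Sigma$, $\mathcal C(\mathbf s)=\{\mathbf x\in(\Sigma^* )^\circ: H(\mathbf x)^{-1}\mathbf s\in\Sigma^*\}$ (the dual certificates of $\mathbf s$), and for $\mathbf x\in(\Sigma^* )^\circ$, $\mathcal P(\mathbf x)=\{\mathbf s\in\Sigma: H(\mathbf x)^{-1}\mathbf s\in\Sigma^*\}$. *)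

From HB Require Import structures.
From mathcomp Require Import all_boot all_order all_algebra.
From mathcomp Require Import mpoly.
Set Implicit Arguments. Unset Strict Implicit. Unset Printing Implicit Defensive.
Import Order.TTheory GRing.Theory Num.Theory.
Local Open Scope ring_scope.

(* total degree at most k  (msize p = 1 + deg p, and msize 0 = 0) *)
Definition deg_le (R : nzRingType) (n : nat) (p : {mpoly R[n]}) (k : nat) : bool :=
  (msize p <= k.+1)%N.

Definition sos_deg (R : nzRingType) (n : nat) (d : nat) (sigma : {mpoly R[n]}) : Prop :=
  exists s : seq {mpoly R[n]},
    all (fun h => deg_le h d) s /\ sigma = \sum_(h <- s) h ^+ 2.

Definition poly_of (R : nzRingType) (n U : nat) (q : 'I_U -> {mpoly R[n]})
  (t : 'cV[R]_U) : {mpoly R[n]} := \sum_(u < U) t u 0 *: q u.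

Definition in_V (R : nzRingType) (n m : nat) (g : 'I_m -> {mpoly R[n]})
  (d : 'I_m -> nat) (f : {mpoly R[n]}) : Prop :=
  exists r : 'I_m -> {mpoly R[n]},
    (forall i, deg_le (r i) (2 * d i)) /\ f = \sum_(i < m) g i * r i.

Definition is_basis_V (R : nzRingType) (n m U : nat) (g : 'I_m -> {mpoly R[n]})
  (d : 'I_m -> nat) (q : 'I_U -> {mpoly R[n]}) : Prop :=
  [/\ forall u, in_V g d (q u),
      forall t : 'cV[R]_U, poly_of q t = 0 -> t = 0
    & forall f, in_V g d f -> exists t : 'cV[R]_U, poly_of q t = f].

Definition is_basis_deg (R : nzRingType) (n k L : nat) (p : 'I_L -> {mpoly R[n]}) : Prop :=
  [/\ forall j, deg_le (p j) k,
      forall c : 'I_L -> R, \sum_(j < L) c j *: p j = 0 -> forall j, c j = 0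
    & forall f : {mpoly R[n]}, deg_le f k ->
        exists c : 'I_L -> R, f = \sum_(j < L) c j *: p j].

(* Sigma, in coordinates w.r.t. q: weighted sums of squares sum_i g_i sigma_i *)
Definition SigmaC (R : nzRingType) (n m U : nat) (g : 'I_m -> {mpoly R[n]})
  (d : 'I_m -> nat) (q : 'I_U -> {mpoly R[n]}) (t : 'cV[R]_U) : Prop :=
  exists sigma : 'I_m -> {mpoly R[n]},
    (forall i, sos_deg (d i) (sigma i)) /\ poly_of q t = \sum_(i < m) g i * sigma i.

Definition dotU (R : nzRingType) (U : nat) (x y : 'cV[R]_U) : R :=
  \sum_(u < U) x u 0 * y u 0.

Definition dual_cone (R : numDomainType) (U : nat) (K : 'cV[R]_U -> Prop)
  (y : 'cV[R]_U) : Prop := forall s, K s -> 0 <= dotU y s.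

Definition dist2 (R : nzRingType) (U : nat) (x y : 'cV[R]_U) : R :=
  \sum_(u < U) (x u 0 - y u 0) ^+ 2.

Definition interior (R : numDomainType) (U : nat) (K : 'cV[R]_U -> Prop)
  (y : 'cV[R]_U) : Prop :=
  exists2 e : R, 0 < e & forall z, dist2 z y < e ^+ 2 -> K z.

Definition closed_set (R : numDomainType) (U : nat) (K : 'cV[R]_U -> Prop) : Prop :=
  forall y, (forall e : R, 0 < e -> exists2 z, K z & dist2 z y < e ^+ 2) -> K y.

Definition convex_cone (R : numDomainType) (U : nat) (K : 'cV[R]_U -> Prop) : Prop :=
  K 0 /\ (forall a b : R, forall x y, 0 <= a -> 0 <= b -> K x -> K y -> K (a *: x + b *: y)).

Definition proper_cone (R : numDomainType) (U : nat) (K : 'cV[R]_U -> Prop) : Prop :=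
  [/\ convex_cone K, closed_set K,
      (forall x, K x -> K (- x) -> x = 0) & exists x, interior K x].

(* Lambda_i(x) = sum_u x_u Lambda_i(e_u), where Lam i u = Lambda_i(e_u) *)
Definition LamI (R : nzRingType) (m U : nat) (L : 'I_m -> nat)
  (Lam : forall i : 'I_m, 'I_U -> 'M[R]_(L i)) (i : 'I_m) (x : 'cV[R]_U) : 'M[R]_(L i) :=
  \sum_(u < U) x u 0 *: Lam i u.

(* Lambda = Lambda_1 (+) ... (+) Lambda_m, block diagonal, of size nu = sum_i L_i *)
Definition LamB (R : nzRingType) (m U : nat) (L : 'I_m -> nat)
  (Lam : forall i : 'I_m, 'I_U -> 'M[R]_(L i)) (x : 'cV[R]_U) : 'M[R]_(\sum_(i < m) L i) :=
  \mxdiag_(i < m) LamI Lam i x.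

Definition delta (R : nzRingType) (U : nat) (u : 'I_U) : 'cV[R]_U := \col_(v < U) (u == v)%:R.

(* adjoint Lambda^* w.r.t. the trace inner product <A,B> = tr(A^T B) *)
Definition LamAdj (R : nzRingType) (m U : nat) (L : 'I_m -> nat)
  (Lam : forall i : 'I_m, 'I_U -> 'M[R]_(L i)) (S : 'M[R]_(\sum_(i < m) L i)) : 'cV[R]_U :=
  \col_(u < U) \tr ((LamB Lam (delta _ u))^T *m S).

(* gradient g(x) = - Lambda^*(Lambda(x)^{-1}) of f = -ln det Lambda *)
Definition grad (R : comUnitRingType) (m U : nat) (L : 'I_m -> nat)
  (Lam : forall i : 'I_m, 'I_U -> 'M[R]_(L i)) (x : 'cV[R]_U) : 'cV[R]_U :=
  - LamAdj Lam (invmx (LamB Lam x)).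

Definition hess (R : comUnitRingType) (m U : nat) (L : 'I_m -> nat)
  (Lam : forall i : 'I_m, 'I_U -> 'M[R]_(L i)) (x : 'cV[R]_U) : 'M[R]_U :=
  \matrix_(u < U, v < U)
    LamAdj Lam (invmx (LamB Lam x) *m LamB Lam (delta _ v) *m invmx (LamB Lam x)) u 0.

Definition dual_norm (R : rcfType) (m U : nat) (L : 'I_m -> nat)
  (Lam : forall i : 'I_m, 'I_U -> 'M[R]_(L i)) (x s : 'cV[R]_U) : R :=
  Num.sqrt ((s^T *m invmx (hess Lam x) *m s) 0 0).

Definition certC (R : rcfType) (n m U : nat) (g : 'I_m -> {mpoly R[n]})
  (d : 'I_m -> nat) (q : 'I_U -> {mpoly R[n]}) (L : 'I_m -> nat)
  (Lam : forall i : 'I_m, 'I_U -> 'M[R]_(L i)) (s x : 'cV[R]_U) : Prop :=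
  interior (dual_cone (SigmaC g d q)) x /\
  dual_cone (SigmaC g d q) (invmx (hess Lam x) *m s).

Definition primP (R : rcfType) (n m U : nat) (g : 'I_m -> {mpoly R[n]})
  (d : 'I_m -> nat) (q : 'I_U -> {mpoly R[n]}) (L : 'I_m -> nat)
  (Lam : forall i : 'I_m, 'I_U -> 'M[R]_(L i)) (x s : 'cV[R]_U) : Prop :=
  SigmaC g d q s /\ dual_cone (SigmaC g d q) (invmx (hess Lam x) *m s).

From HB Require Import structures.
From mathcomp Require Import all_boot all_order all_algebra.
From mathcomp Require Import mpoly.
From mathcomp Require Import ring lra.
Set Implicit Arguments. Unset Strict Implicit. Unset Printing Implicit Defensive.
Import Order.TTheory GRing.Theory Num.Theory.
Local Open Scope ring_scope.

(* Write [X = Lam(x)], positive definite for [x] interior to the dual cone,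
   and [y = H(x)^-1 t].  The pairing [w . H(x) y] is the local inner product
   [<Lam w, Lam y>_X = tr (Lam(w) X^-1 Lam(y) X^-1)], so [x . t = tr (Lam(y) X^-1)],
   [t . y = <Lam y, Lam y>_X], and the dual norm of [t + g(x) = H(x) (y - x)] is
   the local norm of [Lam(y) - X].  As [Sigma] is generated by the weighted
   squares [g_i (p_i . c)^2], whose pairing with [y] is [c^T Lam_i(y) c], [y]
   lies in the dual cone once [Lam(y)] is positive semidefinite.  Both claims
   thus become matrix inequalities, proved by Cauchy-Schwarz for [<.,.>_X]
   against the rank-one matrix [X v v^T X], whose pairing with [M] is [v^T M v]:
   the local unit ball around [X] is positive semidefinite, and so is any
   symmetric [Y] with [tr (Y X^-1) >= 0] and
   [(nu - 1) <Y, Y>_X <= tr (Y X^-1)^2]. *)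

Section QuadraticForms.
Variable R : realFieldType.

Definition qform n (A : 'M[R]_n) (v : 'cV[R]_n) : R := (v^T *m A *m v) 0 0.

Definition pdmx n (A : 'M[R]_n) := forall v : 'cV[R]_n, v != 0 -> 0 < qform A v.

Definition psdmx n (A : 'M[R]_n) := forall v : 'cV[R]_n, 0 <= qform A v.

Lemma qform0 n (A : 'M[R]_n) : qform A 0 = 0.
Proof. by rewrite /qform mulmx0 mxE. Qed.

Lemma qformDl n (A B : 'M[R]_n) v : qform (A + B) v = qform A v + qform B v.
Proof. by rewrite /qform mulmxDr mulmxDl mxE. Qed.

Lemma qformN n (A : 'M[R]_n) v : qform (- A) v = - qform A v.
Proof. by rewrite /qform mulmxN mulNmx mxE. Qed.

Lemma qformZ n k (A : 'M[R]_n) v : qform (k *: A) v = k * qform A v.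
Proof. by rewrite /qform -scalemxAr -scalemxAl mxE. Qed.

Lemma qformE k (M : 'M[R]_k) c : qform M c = \sum_j \sum_l c j 0 * c l 0 * M j l.
Proof.
rewrite /qform mxE exchange_big; apply: eq_bigr => l _.
by rewrite mxE mulr_suml; apply: eq_bigr => j _; rewrite !mxE; ring.
Qed.

Lemma mxE11l n (a : 'M[R]_1) (B : 'M[R]_(1, n)) j : (a *m B) 0 j = a 0 0 * B 0 j.
Proof. by rewrite mxE big_ord1. Qed.

Lemma qform_block n (a : 'M[R]_1) (b : 'M[R]_(1, n)) (D : 'M[R]_n) u (w : 'cV[R]_n) :
  qform (block_mx a b b^T D) (col_mx u w) =
  u 0 0 * a 0 0 * u 0 0 + 2 * u 0 0 * (b *m w) 0 0 + qform D w.
Proof.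
rewrite /qform tr_col_mx mul_row_block mul_row_col !mulmxDl !mxE !big_ord1 !mxE !big_ord1.
have -> : \sum_j w^T 0 j * b^T j 0 = (b *m w) 0 0.
  by rewrite mxE; apply: eq_bigr => j _; rewrite !mxE mulrC.
have -> : \sum_j (u^T *m b) 0 j * w j 0 = u 0 0 * (b *m w) 0 0.
  by rewrite mxE mulr_sumr; apply: eq_bigr => j _; rewrite mxE11l !mxE mulrA.
rewrite !mxE; ring.
Qed.

Lemma pdmx_unit n (A : 'M[R]_n) : pdmx A -> A \in unitmx.
Proof.
move=> pdA; rewrite unitmxE unitfE; apply/negP => /det0P [v v0 vA].
by have := pdA v^T; rewrite trmx_eq0 v0 /qform trmxK vA mul0mx mxE ltxx => /(_ isT).
Qed.

Lemma mxtrace_mul_tr m n (S : 'M[R]_(m, n)) :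
  \tr (S *m S^T) = \sum_i \sum_j S i j ^+ 2.
Proof.
by apply: eq_bigr => i _; rewrite mxE; apply: eq_bigr => j _; rewrite mxE expr2.
Qed.

Lemma mxtrace_mul_tr_ge0 m n (S : 'M[R]_(m, n)) : 0 <= \tr (S *m S^T).
Proof.
by rewrite mxtrace_mul_tr sumr_ge0 // => i _; rewrite sumr_ge0 // => j _; apply: sqr_ge0.
Qed.

Lemma mxtrace_mul_tr_eq0 m n (S : 'M[R]_(m, n)) : \tr (S *m S^T) = 0 -> S = 0.
Proof.
rewrite mxtrace_mul_tr => tr0; apply/matrixP => i j; rewrite mxE.
apply/eqP; rewrite -sqrf_eq0; apply/eqP.
have row_ge0 k : 0 <= \sum_l S k l ^+ 2 by apply: sumr_ge0 => l _; apply: sqr_ge0.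
move/psumr_eq0P: tr0 => /(_ (fun k _ => row_ge0 k) i isT) /psumr_eq0P; apply=> // l _.
exact: sqr_ge0.
Qed.

Lemma pdmx_inv n (A : 'M[R]_n) : A^T = A -> pdmx A -> pdmx (invmx A).
Proof.
move=> symA pdA v v0; have Au := pdmx_unit pdA.
have Av0 : invmx A *m v != 0.
  by apply: contraNneq v0 => Av0; rewrite -(mulKVmx Au v) Av0 mulmx0.
have := pdA _ Av0; congr (0 < _).
by rewrite /qform trmx_mul trmx_inv symA -!mulmxA (mulmxA A) mulmxV // mul1mx.
Qed.

End QuadraticForms.

(* Cholesky: eliminating the first row leaves the positive definite Schur
   complement [D - a^-1 b^T b], which is factored by induction. *)
Lemma pdmx_cholesky (R : rcfType) n (A : 'M[R]_n) :
  A^T = A -> pdmx A -> exists C : 'M[R]_n, A = C^T *m C.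
Proof.
elim: n A => [|n IH] A symA pdA; first by exists 0; apply/matrixP => -[].
move: A symA pdA; change (forall A : 'M[R]_(1 + n),
  A^T = A -> pdmx A -> exists C : 'M[R]_(1 + n), A = C^T *m C) => A.
rewrite -[A]submxK; move: (ulsubmx A) (ursubmx A) (dlsubmx A) (drsubmx A) => a b c D.
rewrite tr_block_mx => /eq_block_mx [_ _ <- symD] pdA.
pose al := a 0 0.
have al_gt0 : 0 < al.
  have := pdA (col_mx 1 0); rewrite qform_block col_mx_eq0 oner_eq0 mulmx0 qform0.
  by rewrite !mxE mul1r mulr1 mulr0 !addr0; apply.
have alN0 : al != 0 by rewrite gt_eqF.
pose S := D - al^-1 *: (b^T *m b).
have symS : S^T = S by rewrite /S linearB /= linearZ /= trmx_mul trmxK symD.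
have pdS : pdmx S.
  move=> w w0; pose be := (b *m w) 0 0.
  have := pdA (col_mx (- (be / al))%:M w).
  rewrite qform_block col_mx_eq0 (negbTE w0) andbF => /(_ isT).
  have qform_btb : qform (b^T *m b) w = be ^+ 2.
    by rewrite /qform /be mulmxA -trmx_mul -mulmxA mxE big_ord1 !mxE expr2.
  rewrite /S qformDl qformN qformZ qform_btb [(- _)%:M 0 0]mxE mulr1n.
  suff -> : - (be / al) * al * - (be / al) + 2 * - (be / al) * be + qform D w =
            qform D w - al^-1 * be ^+ 2 by [].
  by field.
have [C' defS] := IH S symS pdS.
pose s := Num.sqrt al.
have sN0 : s != 0 by rewrite gt_eqF // sqrtr_gt0.
have ss : s * s = al by rewrite -expr2 sqr_sqrtr ?ltW.
exists (block_mx s%:M (s^-1 *: b) 0 C').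
rewrite tr_block_mx mulmx_block !trmx0 !mulmx0 !mul0mx !addr0 tr_scalar_mx -defS /S.
congr block_mx.
- by rewrite [LHS]mx11_scalar -scalar_mxM ss.
- by rewrite mul_scalar_mx scalerA mulfV // scale1r.
- by rewrite mul_mx_scalar [(s^-1 *: b)^T]linearZ scalerA mulfV // scale1r.
- rewrite [(s^-1 *: b)^T]linearZ -scalemxAl -scalemxAr scalerA -invfM ss.
  by rewrite addrC subrK.
Qed.

Section LogdetHessian.
Variables (R : rcfType) (n : nat) (X : 'M[R]_n).
Hypotheses (symX : X^T = X) (pdX : pdmx X).

Definition logdet_hess (A B : 'M[R]_n) : R := \tr (A *m invmx X *m B *m invmx X).

Local Notation "'[ A , B ]" := (logdet_hess A B).

Let Xu : X \in unitmx := pdmx_unit pdX.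

Lemma logdet_hessC A B : '[A, B] = '[B, A].
Proof. by rewrite /logdet_hess -mulmxA mxtrace_mulC !mulmxA. Qed.

Lemma logdet_hessBl A B C : '[A - B, C] = '[A, C] - '[B, C].
Proof. by rewrite /logdet_hess !mulmxBl linearB. Qed.

Lemma logdet_hessZl a A C : '[a *: A, C] = a * '[A, C].
Proof. by rewrite /logdet_hess -!scalemxAl mxtraceZ. Qed.

Lemma logdet_hessBr A B C : '[C, A - B] = '[C, A] - '[C, B].
Proof. by rewrite logdet_hessC logdet_hessBl !(logdet_hessC C). Qed.

Lemma logdet_hessZr a A C : '[C, a *: A] = a * '[C, A].
Proof. by rewrite logdet_hessC logdet_hessZl logdet_hessC. Qed.

(* With [invmx X = C^T C], [A] has squared norm [\tr (S S^T)] for [S = C A C^T]. *)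
Lemma logdet_hess_gt0 A : A^T = A -> A != 0 -> 0 < '[A, A].
Proof.
move=> symA A0.
have symXi : (invmx X)^T = invmx X by rewrite trmx_inv symX.
have [C defXi] := pdmx_cholesky symXi (pdmx_inv symX pdX).
have Cu : C \in unitmx.
  by move: (unitmx_inv X); rewrite Xu defXi !unitmxE det_mulmx det_tr unitrM => /andP[].
have -> : '[A, A] = \tr (C *m A *m C^T *m (C *m A *m C^T)^T).
  rewrite /logdet_hess defXi !trmx_mul trmxK symA !mulmxA.
  by rewrite mxtrace_mulC !mulmxA.
rewrite lt_def mxtrace_mul_tr_ge0 andbT; apply: contraNneq A0 => /mxtrace_mul_tr_eq0 S0.
have CTu : C^T \in unitmx by rewrite unitmx_tr.
by rewrite -(mulKmx Cu A) -(mulmxK CTu (C *m A)) S0 mul0mx mulmx0.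
Qed.

Lemma logdet_hess_eq0 A : A^T = A -> '[A, A] = 0 -> A = 0.
Proof. by move=> symA; apply: contra_eq => A0; rewrite gt_eqF // logdet_hess_gt0. Qed.

Lemma logdet_hess_ge0 A : A^T = A -> 0 <= '[A, A].
Proof.
move=> symA; have [->|A0] := eqVneq A 0; last exact/ltW/logdet_hess_gt0.
by rewrite /logdet_hess !mul0mx mxtrace0.
Qed.

Lemma logdet_hess_CauchySchwarz A B :
  A^T = A -> B^T = B -> '[A, B] ^+ 2 <= '[A, A] * '[B, B].
Proof.
move=> symA symB; have [->|B0] := eqVneq B 0.
  by rewrite /logdet_hess !mulmx0 !mul0mx mxtrace0 expr0n mulr0.
have BB_gt0 := logdet_hess_gt0 symB B0.
pose l := '[A, B] / '[B, B].
have : 0 <= '[A - l *: B, A - l *: B].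
  by apply: logdet_hess_ge0; rewrite linearB /= linearZ /= symA symB.
rewrite !(logdet_hessBl, logdet_hessBr, logdet_hessZl, logdet_hessZr) (logdet_hessC B A).
have -> : '[A, A] - l * '[A, B] - l * ('[A, B] - l * '[B, B]) =
          ('[A, A] * '[B, B] - '[A, B] ^+ 2) / '[B, B] by rewrite /l; field; rewrite gt_eqF.
by rewrite pmulr_lge0 ?invr_gt0 // subr_ge0.
Qed.

Lemma logdet_hessXl M : '[X, M] = \tr (M *m invmx X).
Proof. by rewrite /logdet_hess mulmxV // mul1mx. Qed.

Lemma logdet_hessXX : '[X, X] = n%:R.
Proof. by rewrite logdet_hessXl mulmxV // mxtrace1. Qed.

Lemma logdet_hess_rank1 M (v : 'cV[R]_n) : '[M, X *m v *m v^T *m X] = qform M v.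
Proof.
rewrite /logdet_hess /qform !mulmxA mulmxKV // -!mulmxA mulmxV // mulmx1.
by rewrite mulmxA mxtrace_mulC mulmxA /mxtrace big_ord1.
Qed.

Lemma rank1_sym (v : 'cV[R]_n) : (X *m v *m v^T *m X)^T = X *m v *m v^T *m X.
Proof. by rewrite !trmx_mul trmxK symX !mulmxA. Qed.

Lemma qform_rank1 (v : 'cV[R]_n) : qform (X *m v *m v^T *m X) v = qform X v ^+ 2.
Proof.
rewrite /qform.
have -> : v^T *m (X *m v *m v^T *m X) *m v = (v^T *m X *m v) *m (v^T *m X *m v).
  by rewrite !mulmxA.
by rewrite mxE11l expr2.
Qed.

Lemma psdmx_dikin D : D^T = D -> '[D, D] <= 1 -> psdmx (X + D).
Proof.
move=> symD DD_le1 v; rewrite leNgt qformDl; apply/negP => neg.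
have v0 : v != 0 by apply: contraTneq neg => ->; rewrite !qform0 addr0 ltxx.
have r_gt0 := pdX v0.
have := logdet_hess_CauchySchwarz symD (rank1_sym v).
rewrite !logdet_hess_rank1 qform_rank1 => CS.
have : '[D, D] * qform X v ^+ 2 <= qform X v ^+ 2 by rewrite ler_piMl ?sqr_ge0.
nra.
Qed.

(* For [v^T Y v < 0], Cauchy-Schwarz for the components of [Y] and [X]
   orthogonal to the rank-one direction [N] contradicts the trace bound. *)
Lemma psdmx_of_mxtrace_bound Y : Y^T = Y -> 0 <= \tr (Y *m invmx X) ->
  (n%:R - 1) * '[Y, Y] <= \tr (Y *m invmx X) ^+ 2 -> psdmx Y.
Proof.
move=> symY a_ge0 YY_le v; rewrite leNgt; apply/negP => m_lt0.
have v0 : v != 0 by apply: contraTneq m_lt0 => ->; rewrite qform0 ltxx.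
have n1_ge0 : 0 <= n%:R - 1 :> R.
  rewrite subr_ge0 ler1n lt0n; apply: contra_neq v0 => n0.
  by apply/matrixP => i; move: (ltn_ord i); rewrite {2}n0.
have r_gt0 := pdX v0.
set r := qform X v in r_gt0; set a := \tr (Y *m invmx X) in a_ge0 YY_le.
pose mu := qform Y v / r.
have mu_lt0 : mu < 0 by rewrite pmulr_llt0 ?invr_gt0.
have [N defN] : exists N, N = r^-1 *: (X *m v *m v^T *m X) by eexists.
have symN : N^T = N by rewrite defN linearZ /= rank1_sym.
have YN : '[Y, N] = mu by rewrite defN logdet_hessZr logdet_hess_rank1 mulrC.
have XN : '[X, N] = 1 by rewrite defN logdet_hessZr logdet_hess_rank1 mulVf ?gt_eqF.
have NN : '[N, N] = 1.
  rewrite defN logdet_hessZr logdet_hessZl logdet_hess_rank1 qform_rank1 -/r.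
  by field; rewrite gt_eqF.
have YX : '[Y, X] = a by rewrite logdet_hessC logdet_hessXl.
have symA : (Y - mu *: N)^T = Y - mu *: N by rewrite linearB /= linearZ /= symY symN.
have symB : (X - N)^T = X - N by rewrite linearB /= symX symN.
have := logdet_hess_CauchySchwarz symA symB.
rewrite !(logdet_hessBl, logdet_hessBr, logdet_hessZl, logdet_hessZr).
rewrite (logdet_hessC N Y) (logdet_hessC N X) YN XN NN YX logdet_hessXX.
have mu2_gt0 : 0 < mu ^+ 2 by rewrite exprn_even_gt0 //= lt_eqF.
have : 0 <= a * - mu by rewrite mulr_ge0 // oppr_ge0 ltW.
have : 0 <= (n%:R - 1) * mu ^+ 2 by rewrite mulr_ge0 ?sqr_ge0.
nra.
Qed.

End LogdetHessian.

Section BlockDiagonal.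
Variables (R : realFieldType) (k : nat) (p_ : 'I_k -> nat).

Lemma mxdiag_scale (a : R) (B : forall i, 'M[R]_(p_ i)) :
  \mxdiag_i (a *: B i) = a *: \mxdiag_i B i.
Proof.
apply/mxblockP => i j.
have subZ (M : 'M[R]_(\sum_i p_ i)) : submxblock (a *: M) i j = a *: submxblock M i j.
  by apply/matrixP => r s; rewrite !mxE.
by rewrite subZ !mxblockK; case: eqVneq => [->|]; rewrite ?conform_mx_id ?scaler0.
Qed.

Lemma qform_mxdiag (B : forall i, 'M[R]_(p_ i)) (v : 'cV[R]_(\sum_i p_ i)) :
  qform (\mxdiag_i B i) v = \sum_i qform (B i) (submxcol v i).
Proof.
rewrite /qform -{1 2}(submxcolK v) tr_mxcol -mulmxA mul_mxdiag_mxcol mul_mxrow_mxcol summxE.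
by apply: eq_bigr => i _; rewrite mulmxA.
Qed.

Lemma pdmx_mxdiag (B : forall i, 'M[R]_(p_ i)) :
  (forall i, pdmx (B i)) -> pdmx (\mxdiag_i B i).
Proof.
move=> pdB v v0; rewrite qform_mxdiag.
case: (pickP (fun i => submxcol v i != 0)) => [i vi0 | v_eq0]; last first.
  by case/eqP: v0; apply/mxcolP => i; rewrite submxcol0; apply/eqP/negbFE/v_eq0.
rewrite (bigD1 i) //= ltr_pwDl ?pdB //.
apply: sumr_ge0 => j _; have [->|vj0] := eqVneq (submxcol v j) 0; first by rewrite qform0.
exact/ltW/pdB.
Qed.

Lemma psdmx_mxdiag_block (B : forall i, 'M[R]_(p_ i)) i :
  psdmx (\mxdiag_j B j) -> psdmx (B i).
Proof.
move=> psdB c; have := psdB (\mxcol_j (if j == i then conform_mx 0 c else 0)).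
rewrite qform_mxdiag (bigD1 i) //= big1 ?addr0 => [|j /negbTE ji].
  by rewrite mxcolK eqxx conform_mx_id.
by rewrite mxcolK ji qform0.
Qed.

End BlockDiagonal.

Section Coordinates.
Variables (R : realDomainType) (U : nat).
Implicit Types (a b c w : 'cV[R]_U).

Lemma dotUE a b : dotU a b = (a^T *m b) 0 0.
Proof. by rewrite mxE; apply: eq_bigr => u _; rewrite mxE. Qed.

Lemma dotUC a b : dotU a b = dotU b a.
Proof. by apply: eq_bigr => u _; rewrite mulrC. Qed.

Lemma dotUDr a b c : dotU a (b + c) = dotU a b + dotU a c.
Proof. by rewrite !dotUE mulmxDr mxE. Qed.

Lemma dotUZr k a b : dotU a (k *: b) = k * dotU a b.
Proof. by rewrite !dotUE -scalemxAr mxE. Qed.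

Lemma dotUDl a b c : dotU (b + c) a = dotU b a + dotU c a.
Proof. by rewrite dotUC dotUDr !(dotUC a). Qed.

Lemma dotUZl k a b : dotU (k *: a) b = k * dotU a b.
Proof. by rewrite dotUC dotUZr dotUC. Qed.

Lemma dotU_sum a (I : Type) (r : seq I) (F : I -> 'cV[R]_U) :
  dotU a (\sum_(i <- r) F i) = \sum_(i <- r) dotU a (F i).
Proof. by rewrite dotUE mulmx_sumr summxE; apply: eq_bigr => i _; rewrite dotUE. Qed.

Lemma dotU_delta w u : dotU w (delta R u) = w u 0.
Proof.
rewrite /dotU (bigD1 u) //= mxE eqxx mulr1 big1 ?addr0 // => v vu.
by rewrite mxE eq_sym (negbTE vu) mulr0.
Qed.

Lemma dotU_ge0 a : 0 <= dotU a a.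
Proof. by apply: sumr_ge0 => u _; rewrite -expr2 sqr_ge0. Qed.

Lemma dotU_gt0 a : a != 0 -> 0 < dotU a a.
Proof.
move=> a0; rewrite lt_def dotU_ge0 andbT; apply: contra_neq a0 => /psumr_eq0P a_eq0.
apply/matrixP => u j; rewrite (ord1 j) mxE; apply/eqP; rewrite -sqrf_eq0 expr2.
by rewrite a_eq0 // => v _; rewrite -expr2 sqr_ge0.
Qed.

Lemma dist2_addl a b : dist2 (a + b) a = dotU b b.
Proof. by apply: eq_bigr => u _; rewrite mxE addrAC subrr add0r expr2. Qed.

Lemma dist2xx a : dist2 a a = 0.
Proof. by rewrite /dist2 big1 // => u _; rewrite subrr expr0n. Qed.

Lemma interior_mem (K : 'cV[R]_U -> Prop) a : interior K a -> K a.
Proof. by case=> e e_gt0 K_e; apply: K_e; rewrite dist2xx exprn_gt0. Qed.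

End Coordinates.

(* Otherwise the index [i] of the section variable [p] would become implicit. *)
Unset Implicit Arguments.

Section WeightedSOSCone.
Variables (R : rcfType) (n m U : nat)
  (g : 'I_m -> {mpoly R[n]}) (d : 'I_m -> nat) (q : 'I_U -> {mpoly R[n]})
  (L : 'I_m -> nat) (p : forall i : 'I_m, 'I_(L i) -> {mpoly R[n]})
  (Lam : forall i : 'I_m, 'I_U -> 'M[R]_(L i)).
Hypotheses (g_neq0 : forall i, g i != 0) (q_basis : is_basis_V g d q)
  (p_basis : forall i, is_basis_deg (d i) (p i))
  (Lam_def : forall i (j k : 'I_(L i)),
     \sum_(u < U) (Lam i u) j k *: q u = g i * (p i j * p i k))
  (Sigma_proper : proper_cone (SigmaC g d q)).

Local Notation Sigma := (SigmaC g d q).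

Lemma poly_of_is_linear : linear (poly_of q).
Proof.
move=> a s t; rewrite /poly_of scaler_sumr -big_split; apply: eq_bigr => u _.
by rewrite !mxE scalerDl scalerA.
Qed.

HB.instance Definition _ := GRing.isLinear.Build R 'cV[R]_U {mpoly R[n]} _ (poly_of q)
  poly_of_is_linear.

Lemma poly_of_inj : injective (poly_of q).
Proof.
case: q_basis => _ q_free _ s t st; apply/eqP; rewrite -subr_eq0; apply/eqP/q_free.
by rewrite raddfB /= st subrr.
Qed.

Lemma LamI_delta i u : LamI Lam i (delta R u) = Lam i u.
Proof.
rewrite /LamI (bigD1 u) //= mxE eqxx scale1r big1 ?addr0 // => v vu.
by rewrite mxE eq_sym (negbTE vu) scale0r.
Qed.

Lemma LamB_delta u : LamB Lam (delta R u) = \mxdiag_i Lam i u.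
Proof. by rewrite /LamB; apply: eq_mxdiag => i; apply: LamI_delta. Qed.

Lemma LamB_sum_delta w : LamB Lam w = \sum_u w u 0 *: LamB Lam (delta R u).
Proof.
transitivity (\sum_u \mxdiag_i (w u 0 *: Lam i u)); first by rewrite -mxdiag_sum.
by apply: eq_bigr => u _; rewrite mxdiag_scale LamB_delta.
Qed.

Lemma LamB_sub y x : LamB Lam (y - x) = LamB Lam y - LamB Lam x.
Proof. by rewrite !LamB_sum_delta -sumrB; apply: eq_bigr => u _; rewrite !mxE scalerBl. Qed.

Lemma Lam_sym i u : (Lam i u)^T = Lam i u.
Proof.
apply/matrixP => j k; rewrite mxE; apply/eqP; rewrite -subr_eq0; apply/eqP.
have /matrixP/(_ u 0) : \col_v (Lam i v k j - Lam i v j k) = 0 :> 'cV_U.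
  case: q_basis => _ q_free _; apply: q_free; rewrite /poly_of.
  under eq_bigr do rewrite mxE scalerBl.
  by rewrite sumrB !Lam_def (mulrC (p i k)) subrr.
by rewrite !mxE.
Qed.

Lemma LamB_sym w : (LamB Lam w)^T = LamB Lam w.
Proof.
rewrite LamB_sum_delta linear_sum; apply: eq_bigr => u _.
rewrite linearZ /= LamB_delta tr_mxdiag; congr (_ *: _).
by apply: eq_mxdiag => i; rewrite Lam_sym.
Qed.

Lemma dotU_LamAdj w S : dotU w (LamAdj Lam S) = \tr (LamB Lam w *m S).
Proof.
rewrite /dotU LamB_sum_delta mulmx_suml linear_sum /=; apply: eq_bigr => u _.
by rewrite mxE -scalemxAl mxtraceZ LamB_sym.
Qed.

Lemma hess_mulmx x w :
  hess Lam x *m w = LamAdj Lam (invmx (LamB Lam x) *m LamB Lam w *m invmx (LamB Lam x)).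
Proof.
apply/matrixP => u k; rewrite (ord1 k) {1}mxE [RHS]mxE.
rewrite [LamB Lam w]LamB_sum_delta mulmx_sumr mulmx_suml mulmx_sumr linear_sum /=.
apply: eq_bigr => v _; rewrite !mxE mulrC.
by rewrite -scalemxAr -scalemxAl -scalemxAr mxtraceZ.
Qed.

Lemma dotU_hess x y w :
  dotU w (hess Lam x *m y) = logdet_hess (LamB Lam x) (LamB Lam w) (LamB Lam y).
Proof. by rewrite hess_mulmx dotU_LamAdj /logdet_hess !mulmxA. Qed.

Definition basis_comb i (c : 'cV[R]_(L i)) : {mpoly R[n]} := \sum_j c j 0 *: p i j.

(* The coordinates of the weighted square [g_i (p_i . c)^2]. *)
Definition weighted_square i (c : 'cV[R]_(L i)) : 'cV[R]_U := \col_u qform (Lam i u) c.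

Lemma poly_of_weighted_square i c :
  poly_of q (weighted_square i c) = g i * basis_comb i c ^+ 2.
Proof.
have -> : g i * basis_comb i c ^+ 2 =
          \sum_j \sum_l (c j 0 * c l 0) *: (g i * (p i j * p i l)).
  rewrite /basis_comb expr2 mulr_suml mulr_sumr; apply: eq_bigr => j _.
  rewrite mulr_sumr mulr_sumr; apply: eq_bigr => l _.
  by rewrite -scalerAl -!scalerAr !scalerA.
rewrite /poly_of; under eq_bigr do rewrite mxE qformE scaler_suml.
rewrite exchange_big; apply: eq_bigr => j _; under eq_bigr do rewrite scaler_suml.
rewrite exchange_big; apply: eq_bigr => l _; under eq_bigr do rewrite -scalerA.
by rewrite -scaler_sumr Lam_def.
Qed.

Lemma dotU_weighted_square y i c : dotU y (weighted_square i c) = qform (LamI Lam i y) c.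
Proof.
rewrite /dotU /LamI qformE; under eq_bigr do rewrite mxE qformE mulr_sumr.
rewrite exchange_big; apply: eq_bigr => j _; under eq_bigr do rewrite mulr_sumr.
rewrite exchange_big; apply: eq_bigr => l _.
by rewrite summxE mulr_sumr; apply: eq_bigr => u _; rewrite mxE; ring.
Qed.

Lemma basis_comb_deg i c : deg_le (basis_comb i c) (d i).
Proof.
case: (p_basis i) => p_deg _ _; apply: leq_trans (msize_sum _ _ _) _.
by apply/bigmax_leqP => j _; apply: leq_trans (msizeZ_le _ _) _; apply: p_deg.
Qed.

Lemma basis_comb_eq0 i c : basis_comb i c = 0 -> c = 0.
Proof.
case: (p_basis i) => _ p_free _ /p_free c0.
by apply/matrixP => j k; rewrite (ord1 k) c0 mxE.
Qed.

Lemma weighted_square_Sigma i c : Sigma (weighted_square i c).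
Proof.
exists (fun j => if j == i then basis_comb i c ^+ 2 else 0); split.
  move=> j; case: eqVneq => [->|_]; last by exists [::]; rewrite big_nil.
  by exists [:: basis_comb i c]; rewrite /= basis_comb_deg big_seq1.
rewrite poly_of_weighted_square (bigD1 i) //= eqxx big1 ?addr0 // => j /negbTE ->.
by rewrite mulr0.
Qed.

Lemma sum_squares_basis_comb i (l : seq {mpoly R[n]}) :
  all (fun h => deg_le h (d i)) l ->
  exists F : seq 'cV[R]_(L i), \sum_(h <- l) h ^+ 2 = \sum_(c <- F) basis_comb i c ^+ 2.
Proof.
elim: l => [|h l IH]; first by exists [::]; rewrite !big_nil.
case/andP => h_deg /IH [F defF]; case: (p_basis i) => _ _ p_span.
have [c defh] := p_span h h_deg.
exists (\col_j c j :: F); rewrite !big_cons defF defh /basis_comb.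
by congr (_ ^+ 2 + _); apply: eq_bigr => j _; rewrite mxE.
Qed.

Lemma Sigma_sum_weighted_squares s : Sigma s ->
  exists F : forall i, seq 'cV[R]_(L i), s = \sum_i \sum_(c <- F i) weighted_square i c.
Proof.
case=> sigma [sigma_sos defs].
have /fin_all_exists [F defF] :
    forall i, exists F : seq 'cV[R]_(L i), sigma i = \sum_(c <- F) basis_comb i c ^+ 2.
  move=> i; have [l [l_deg ->]] := sigma_sos i.
  exact: sum_squares_basis_comb.
exists F; apply: poly_of_inj; rewrite defs raddf_sum /=; apply: eq_bigr => i _.
by rewrite raddf_sum /= defF mulr_sumr; apply: eq_bigr => c _; rewrite poly_of_weighted_square.
Qed.

Lemma dual_cone_of_LamI_psd y :
  (forall i, psdmx (LamI Lam i y)) -> dual_cone Sigma y.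
Proof.
move=> psd_y s /Sigma_sum_weighted_squares [F ->]; rewrite dotU_sum.
apply: sumr_ge0 => i _; rewrite dotU_sum; apply: sumr_ge0 => c _.
by rewrite dotU_weighted_square; apply: psd_y.
Qed.

Lemma dual_cone_of_LamB_psd y : psdmx (LamB Lam y) -> dual_cone Sigma y.
Proof.
move=> psd_y; apply: dual_cone_of_LamI_psd => i.
exact: (psdmx_mxdiag_block (B := LamI Lam ^~ y)).
Qed.

Lemma dotU_Sigma_eq0 y : (forall i, LamI Lam i y = 0) -> forall s, Sigma s -> dotU y s = 0.
Proof.
move=> y0 s /Sigma_sum_weighted_squares [F ->]; rewrite dotU_sum big1 // => i _.
by rewrite dotU_sum big1 // => c _; rewrite dotU_weighted_square y0 /qform mulmx0 mul0mx mxE.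
Qed.

(* Moving [x] slightly against the weighted square [s] stays in the dual cone,
   so [x . s] exceeds a positive multiple of [s . s]. *)
Lemma LamI_pd_of_interior x i : interior (dual_cone Sigma) x -> pdmx (LamI Lam i x).
Proof.
case=> e e_gt0 ball_e c c0; set s := weighted_square i c.
have s0 : s != 0.
  apply: contra_neq c0 => s0; apply: basis_comb_eq0; apply/eqP.
  move: (poly_of_weighted_square i c); rewrite -/s s0 raddf0 => /esym/eqP.
  by rewrite mulf_eq0 (negbTE (g_neq0 i)) sqrf_eq0.
have S_gt0 := dotU_gt0 s0; set S := dotU s s in S_gt0.
have S1_gt0 : 0 < S + 1 by rewrite addr_gt0.
pose eps := e / (S + 1).
have eps_gt0 : 0 < eps by rewrite divr_gt0.
have e_eq : e = eps * (S + 1) by rewrite /eps divfK // gt_eqF.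
have near : dist2 (x + (- eps) *: s) x < e ^+ 2.
  rewrite dist2_addl dotUZl dotUZr -/S e_eq.
  have : 0 < eps * eps by rewrite mulr_gt0.
  nra.
have := ball_e _ near s (weighted_square_Sigma i c).
rewrite dotUDl dotUZl -/S dotU_weighted_square mulNr subr_ge0.
by apply: lt_le_trans; rewrite mulr_gt0.
Qed.

Lemma LamB_pd_of_interior x : interior (dual_cone Sigma) x -> pdmx (LamB Lam x).
Proof. by move=> x_int; apply: pdmx_mxdiag => i; apply: LamI_pd_of_interior. Qed.

Lemma Sigma_perp_eq0 w : (forall s, Sigma s -> dotU w s = 0) -> w = 0.
Proof.
case: Sigma_proper => _ _ _ [t [e e_gt0 ball_e]] w_perp.
apply/matrixP => u k; rewrite (ord1 k) mxE.
have e2_gt0 : 0 < e / 2 by rewrite divr_gt0.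
have t_in : Sigma t by apply: ball_e; rewrite dist2xx exprn_gt0.
have tu_in : Sigma (t + (e / 2) *: delta R u).
  apply: ball_e; rewrite dist2_addl dotUZl dotUZr dotU_delta mxE eqxx mulr1 -expr2.
  by rewrite ltrXn2r ?ltW // ltr_pdivrMr // ltr_pMr // ltr1n.
have /eqP := w_perp _ tu_in; rewrite dotUDr (w_perp _ t_in) add0r dotUZr dotU_delta.
by rewrite mulf_eq0 gt_eqF //= => /eqP.
Qed.

(* [H(x) w = 0] forces [Lam(w) = 0], since [w . H(x) w] is the squared
   local norm of [Lam(w)]; then [w] is orthogonal to [Sigma]. *)
Lemma hess_unit x : interior (dual_cone Sigma) x -> hess Lam x \in unitmx.
Proof.
move=> x_int; rewrite unitmxE unitfE -det_tr; apply/negP => /det0P [v v0 vH].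
have pdX := LamB_pd_of_interior x x_int.
have Hw : hess Lam x *m v^T = 0 by rewrite -[hess Lam x]trmxK -trmx_mul vH trmx0.
have Lv0 : LamB Lam v^T = 0.
  apply: (logdet_hess_eq0 (LamB_sym x) pdX) (LamB_sym _) _.
  by rewrite -dotU_hess Hw dotUE mulmx0 mxE.
case/eqP: v0; rewrite -[v]trmxK; apply/eqP; rewrite trmx_eq0; apply/eqP.
apply/Sigma_perp_eq0/dotU_Sigma_eq0 => i.
by rewrite -(submxblock_diag (LamI Lam ^~ v^T)) -/(LamB Lam v^T) Lv0;
  apply/matrixP => a b; rewrite !mxE.
Qed.

Lemma hess_mulmx_inv x (t : 'cV[R]_U) :
  interior (dual_cone Sigma) x -> hess Lam x *m (invmx (hess Lam x) *m t) = t.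
Proof. by move=> x_int; rewrite mulKVmx // hess_unit. Qed.

Lemma hess_inv_dual_of_trace_bound (t x : 'cV[R]_U) :
  interior Sigma t -> interior (dual_cone Sigma) x ->
  0 <= (t^T *m (x *m x^T - ((\sum_(i < m) L i)%:R - 1) *: invmx (hess Lam x)) *m t) 0 0 ->
  dual_cone Sigma (invmx (hess Lam x) *m t).
Proof.
move=> t_int x_int bound; set y := invmx (hess Lam x) *m t.
have pdX := LamB_pd_of_interior x x_int.
have Hy : hess Lam x *m y = t by apply: hess_mulmx_inv.
have tr_xt : \tr (LamB Lam y *m invmx (LamB Lam x)) = dotU x t.
  by rewrite -(logdet_hessXl pdX) -dotU_hess Hy.
have YY : logdet_hess (LamB Lam x) (LamB Lam y) (LamB Lam y) = dotU t y.
  by rewrite -dotU_hess Hy dotUC.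
apply: dual_cone_of_LamB_psd.
apply: (psdmx_of_mxtrace_bound (LamB_sym x) pdX (LamB_sym y)); rewrite tr_xt.
  by apply: (interior_mem x_int); apply: (interior_mem t_int).
have tHt : (t^T *m invmx (hess Lam x) *m t) 0 0 = dotU t y by rewrite dotUE /y mulmxA.
have txxt : (t^T *m (x *m x^T) *m t) 0 0 = dotU x t ^+ 2.
  by rewrite mulmxA -(mulmxA (t^T *m x)) mxE11l -!dotUE dotUC expr2.
move: bound; rewrite YY mulmxBr mulmxBl -scalemxAr -scalemxAl.
have entryB (A B : 'M[R]_1) k : (A - k *: B) 0 0 = A 0 0 - k * B 0 0 by rewrite !mxE.
by rewrite entryB tHt txxt subr_ge0.
Qed.

Lemma hess_mulmx_self x : interior (dual_cone Sigma) x -> hess Lam x *m x = - grad Lam x.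
Proof.
move=> x_int; have Xu := pdmx_unit (LamB_pd_of_interior x x_int).
by rewrite /grad opprK hess_mulmx mulVmx // mul1mx.
Qed.

Lemma hess_inv_dual_of_dikin (x t : 'cV[R]_U) :
  interior (dual_cone Sigma) x -> dual_norm Lam x (t - (- grad Lam x)) <= 1 ->
  dual_cone Sigma (invmx (hess Lam x) *m t).
Proof.
move=> x_int; set y := invmx (hess Lam x) *m t.
have pdX := LamB_pd_of_interior x x_int.
have Hy : hess Lam x *m y = t by apply: hess_mulmx_inv.
rewrite -hess_mulmx_self // -{1}Hy -mulmxBr /dual_norm -mulmxA mulKmx ?hess_unit //.
rewrite -dotUE dotUC dotU_hess LamB_sub.
set D := LamB Lam y - LamB Lam x => DD_le1.
have symD : D^T = D by rewrite linearB /= !LamB_sym.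
have DD_ge0 := logdet_hess_ge0 (LamB_sym x) pdX symD.
apply: dual_cone_of_LamB_psd; rewrite -(subrK (LamB Lam x) (LamB Lam y)) -/D addrC.
apply: (psdmx_dikin (LamB_sym x) pdX symD).
by rewrite -(sqr_sqrtr DD_ge0) -(expr1n _ 2) lerXn2r // nnegrE ?sqrtr_ge0.
Qed.

End WeightedSOSCone.

Theorem lemma2 (R : rcfType) (n m U : nat)
  (g : 'I_m -> {mpoly R[n]}) (d : 'I_m -> nat) (q : 'I_U -> {mpoly R[n]})
  (L : 'I_m -> nat) (p : forall i : 'I_m, 'I_(L i) -> {mpoly R[n]})
  (Lam : forall i : 'I_m, 'I_U -> 'M[R]_(L i)) :
  (forall i, g i != 0) ->
  is_basis_V g d q ->
  (forall i, is_basis_deg (d i) (p i)) ->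
  (forall i (j k : 'I_(L i)),
      \sum_(u < U) (Lam i u) j k *: q u = g i * (p i j * p i k)) ->
  proper_cone (SigmaC g d q) ->
  (forall (t x : 'cV[R]_U),
      interior (SigmaC g d q) t ->
      interior (dual_cone (SigmaC g d q)) x ->
      0 <= (t^T *m (x *m x^T - ((\sum_(i < m) L i)%:R - 1) *: invmx (hess Lam x)) *m t) 0 0 ->
      certC g d q Lam t x /\ primP g d q Lam x t)
  /\
  (forall (x t : 'cV[R]_U),
      interior (dual_cone (SigmaC g d q)) x ->
      dual_norm Lam x (t - (- grad Lam x)) <= 1 ->
      dual_cone (SigmaC g d q) (invmx (hess Lam x) *m t)).
Proof.
move=> g_neq0 q_basis p_basis Lam_def Sigma_proper.
split=> [t x t_int x_int bound | x t x_int].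
  have y_dual : dual_cone (SigmaC g d q) (invmx (hess Lam x) *m t).
    exact: hess_inv_dual_of_trace_bound bound.
  by split; split=> //; apply: interior_mem.
exact: hess_inv_dual_of_dikin.
Qed.
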